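(* Let $n\ge2$, $M$ a nonderogatory $d\times d$ matrix with minimal polynomial $\mathbf p$, and $\mathcal B$ a generic maximal subalgebra of $\mathcal T_{n,d}[\mathcal P(M)]$ with associated polynomials $\mathbf s_+,\mathbf s_-$; put $\mathbf d=\mathbf p/(\mathbf s_+\mathbf s_-)$. Let $A\in\mathcal B$ and polynomials $\tilde{\mathbf a}_j$ ($j=\pm1,\dots,\pm(n-1)$), each relatively prime to $\mathbf p$, satisfy $A_j=\mathbf s_+(M)\tilde{\mathbf a}_j(M)$ for $j\ge1$ and $A_j=\mathbf s_-(M)\tilde{\mathbf a}_j(M)$ for $j\le-1$. For each $i=1,\dots,n-1$ choose $\boldsymbol\gamma_i\in\mathbb C[X]$ such that $\mathbf p$ divides $\boldsymbol\gamma_i\tilde{\mathbf a}_{i-n}-1$, and set $\boldsymbol\xi_i=\tilde{\mathbf a}_i\boldsymbol\gamma_i$. Then $\mathbf d$ divides $\boldsymbol\xi_i-\boldsymbol\xi_j$ for all $i,j\in\{1,\dots,n-1\}$.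
   Context: A nonderogatory matrix is one whose minimal polynomial equals its characteristic polynomial; $\mathcal P(M)$ is the algebra of polynomials in $M$; $\mathcal T_{n,d}[\mathcal P(M)]$ is the set of $n\times n$ block Toeplitz matrices $(B_{i-j})_{i,j=0}^{n-1}$ with all $B_m\in\mathcal P(M)$. A maximal subalgebra of $\mathcal T_{n,d}[\mathcal P(M)]$ is a subalgebra contained in it, maximal under inclusion. It is generic if it is contained neither in the set of such matrices with $B_i=0$ for all $i\ge1$ nor in the set with $B_i=0$ for all $i\le-1$. For $B\in\mathcal B$ write $B_j=\mathbf b_j(M)$; $\mathbf s_+$ is the greatest common divisor of $\mathbf p$ and all $\mathbf b_j$ with $j\ge1$, $B\in\mathcal B$, and $\mathbf s_-$ the greatest common divisor of $\mathbf p$ and all $\mathbf b_j$ with $j\le-1$, $B\in\mathcal B$ (these do not depend on $j$ and $\mathbf s_+\mathbf s_-$ divides $\mathbf p$). *)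

From HB Require Import structures.
From mathcomp Require Import all_boot all_order all_algebra.
Set Implicit Arguments. Unset Strict Implicit. Unset Printing Implicit Defensive.
Import Order.TTheory GRing.Theory Num.Theory.
Local Open Scope ring_scope.

(* An (n*d) x (n*d) matrix seen as an n x n array of d x d blocks:
   blk A i j is the (i,j) block (rows i*d..i*d+d-1, columns j*d..). *)
Definition blk (F : fieldType) (n d : nat) (A : 'M[F]_(n * d)) (i j : 'I_n)
  : 'M[F]_d := \matrix_(k, l) A (mxvec_index i k) (mxvec_index j l).

Definition inPM (F : fieldType) (d : nat) (M : 'M[F]_d.+1) (X : 'M[F]_d.+1)
  : Prop := exists q : {poly F}, X = horner_mx M q.

Definition inToeplitzPM (F : fieldType) (n d : nat) (M : 'M[F]_d.+1)
  (A : 'M[F]_(n * d.+1)) : Prop :=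
  (forall i j : 'I_n, inPM M (blk A i j)) /\
  (forall i j i' j' : 'I_n, (i%:Z - j%:Z = i'%:Z - j'%:Z)%R ->
      blk A i j = blk A i' j').

Definition is_subalgebra (F : fieldType) (N : nat) (S : 'M[F]_N -> Prop) : Prop :=
  S 0 /\ (forall X Y, S X -> S Y -> S (X + Y)) /\
  (forall (c : F) X, S X -> S (c *: X)) /\
  (forall X Y, S X -> S Y -> S (X *m Y)).

Definition maximal_subalg_T (F : fieldType) (n d : nat) (M : 'M[F]_d.+1)
  (S : 'M[F]_(n * d.+1) -> Prop) : Prop :=
  is_subalgebra S /\ (forall X, S X -> inToeplitzPM M X) /\
  (forall S' : 'M[F]_(n * d.+1) -> Prop, is_subalgebra S' ->
     (forall X, S X -> S' X) -> (forall X, S' X -> inToeplitzPM M X) ->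
     forall X, S' X -> S X).

(* Generic: not contained in {B_i = 0 for i >= 1} nor in {B_i = 0 for i <= -1}
   (B_m = block (i,j) with i - j = m). *)
Definition generic_subalg (F : fieldType) (n d : nat)
  (S : 'M[F]_(n * d.+1) -> Prop) : Prop :=
  ~ (forall X, S X -> forall i j : 'I_n, (j < i)%N -> blk X i j = 0) /\
  ~ (forall X, S X -> forall i j : 'I_n, (i < j)%N -> blk X i j = 0).

(* s is a gcd of p and all polynomials b with b(M) = B_m, m >= 1 (plus = true)
   resp. m <= -1 (plus = false), B in S. *)
Definition off_poly (F : fieldType) (n d : nat) (M : 'M[F]_d.+1)
  (S : 'M[F]_(n * d.+1) -> Prop) (plus : bool) (b : {poly F}) : Prop :=
  exists X, S X /\ exists i j : 'I_n,
    (if plus then (j < i)%N else (i < j)%N) /\ blk X i j = horner_mx M b.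

Definition is_gcd_assoc (F : fieldType) (n d : nat) (M : 'M[F]_d.+1)
  (S : 'M[F]_(n * d.+1) -> Prop) (plus : bool) (s : {poly F}) : Prop :=
  let p := mxminpoly M in
  s %| p /\ (forall b, off_poly M S plus b -> s %| b) /\
  (forall q : {poly F}, q %| p -> (forall b, off_poly M S plus b -> q %| b) ->
     q %| s).

From HB Require Import structures.
From mathcomp Require Import all_boot all_order all_algebra zify ring.
Set Implicit Arguments. Unset Strict Implicit. Unset Printing Implicit Defensive.
Import Order.TTheory GRing.Theory Num.Theory.
Local Open Scope ring_scope.

(* Put u := p / s_-.  The block Toeplitz matrices that are strictly lower
   triangular with entries in u(M) form a set J with B J, J B, J J contained
   in J for every B of the subalgebra (an upper entry of B is a multiple of
   s_-(M) and s_- u = p).  Hence B + J is a subalgebra of T_{n,d}[P(M)], and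
   maximality forces J to be contained in B; the matrix of J with u(M) on the
   first subdiagonal then shows s_+ | u, i.e. s_+ s_- | p.
   Next, A^2 is Toeplitz, so its (i, j) and (i-1, j-1) blocks agree; their
   difference is A_i A_{-(n-j)} - A_{-(n-i)} A_j, whence
   p | s_+ s_- (a_i a_{j-n} - a_{i-n} a_j), i.e. d | a_i a_{j-n} - a_{i-n} a_j.
   Multiplying by gamma_i gamma_j and using gamma_k a_{k-n} = 1 mod p gives
   d | xi_i - xi_j. *)

Section Blocks.
Variable F : fieldType.

Lemma blkD n d (X Y : 'M[F]_(n * d)) i j : blk (X + Y) i j = blk X i j + blk Y i j.
Proof. by apply/matrixP => a b; rewrite !mxE. Qed.

Lemma blkZ n d c (X : 'M[F]_(n * d)) i j : blk (c *: X) i j = c *: blk X i j.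
Proof. by apply/matrixP => a b; rewrite !mxE. Qed.

Lemma blk0 n d i j : blk (0 : 'M[F]_(n * d)) i j = 0.
Proof. by apply/matrixP => a b; rewrite !mxE. Qed.

Lemma blk_mul n d (X Y : 'M[F]_(n * d)) i j :
  blk (X *m Y) i j = \sum_(k < n) blk X i k *m blk Y k j.
Proof.
apply/matrixP => a b; rewrite !mxE summxE.
rewrite (reindex (uncurry (@mxvec_index n d))) /=; last first.
  apply: onW_bij; have [g g1 g2] := curry_mxvec_bij n d.
  by exists g => x; [apply: g1 | apply: g2].
pose G k c := X (mxvec_index i a) (mxvec_index k c) * Y (mxvec_index k c) (mxvec_index j b).
transitivity (\sum_(p : 'I_n * 'I_d) G p.1 p.2); first by apply: eq_bigr => -[k c].
rewrite -pair_bigA /=.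
by apply: eq_bigr => k _; rewrite !mxE; apply: eq_bigr => c _; rewrite !mxE.
Qed.

Definition unmxvec_index n d (r : 'I_(n * d)) : 'I_n * 'I_d :=
  enum_val (cast_ord (esym (mxvec_cast n d)) r).

Lemma mxvec_indexK n d (i : 'I_n) (k : 'I_d) :
  unmxvec_index (mxvec_index i k) = (i, k).
Proof. by rewrite /unmxvec_index /mxvec_index cast_ordK enum_rankK. Qed.

Definition block_mx_of n d (G : 'I_n -> 'I_n -> 'M[F]_d) : 'M[F]_(n * d) :=
  \matrix_(r, c) G (unmxvec_index r).1 (unmxvec_index c).1
                   (unmxvec_index r).2 (unmxvec_index c).2.

Lemma blk_block_mx_of n d G i j : blk (@block_mx_of n d G) i j = G i j.
Proof. by apply/matrixP => a b; rewrite !mxE !mxvec_indexK. Qed.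

Definition blk_toeplitz n d (X : 'M[F]_(n * d)) :=
  forall i j i' j' : 'I_n, i' = i.+1 :> nat -> j' = j.+1 :> nat ->
    blk X i' j' = blk X i j.

Lemma blk_toeplitzP n d (X : 'M[F]_(n * d)) : blk_toeplitz X ->
  forall i j i' j' : 'I_n, (i%:Z - j%:Z = i'%:Z - j'%:Z)%R ->
    blk X i j = blk X i' j'.
Proof.
move=> HX.
have shift t (i j i' j' : 'I_n) : i' = (i + t)%N :> nat -> j' = (j + t)%N :> nat ->
    blk X i' j' = blk X i j.
  elim: t i j i' j' => [|t IH] i j i' j' ei ej.
    by move: ei ej; rewrite !addn0 => /val_inj -> /val_inj ->.
  have hi : (i + t < n)%N by have := ltn_ord i'; lia.
  have hj : (j + t < n)%N by have := ltn_ord j'; lia.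
  by rewrite (HX (Ordinal hi) (Ordinal hj)) ?ei ?ej ?addnS //; apply: IH.
move=> i j i' j' e.
have e' : (i + j' = i' + j)%N by lia.
case: (leqP i i') => hii; first by symmetry; apply: (shift (i' - i)%N); lia.
by apply: (shift (i - i')%N); lia.
Qed.

(* Shifting a block of a product of Toeplitz matrices along the diagonal
   trades the last term of the block sum for the first one. *)
Lemma blk_mul_succ n d (X Y : 'M[F]_(n * d)) (i j i' j' k0 kl : 'I_n) :
  blk_toeplitz X -> blk_toeplitz Y -> i' = i.+1 :> nat -> j' = j.+1 :> nat ->
  k0 = 0%N :> nat -> kl = n.-1 :> nat ->
  blk (X *m Y) i' j' =
    blk (X *m Y) i j + blk X i' k0 *m blk Y k0 j' - blk X i kl *m blk Y kl j.
Proof.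
case: n X Y i j i' j' k0 kl => [|n] X Y i j i' j' k0 kl; first by case: i.
move=> HX HY ei ej e0 el.
rewrite !blk_mul big_ord_recl (big_ord_recr n (fun k => blk X i k *m blk Y k j)) /=.
have -> : k0 = ord0 by apply: val_inj.
have -> : kl = ord_max by apply: val_inj.
rewrite -[RHS]addrA [_ - _]addrC addrA addrK addrC; congr (_ + _).
apply: eq_bigr => k _.
by rewrite (HX i (widen_ord (leqnSn n) k)) // (HY (widen_ord (leqnSn n) k) j).
Qed.

Lemma blk_toeplitz_mul n d (X Y : 'M[F]_(n * d)) :
  blk_toeplitz X -> blk_toeplitz Y ->
  (forall (i j i' j' k0 kl : 'I_n), i' = i.+1 :> nat -> j' = j.+1 :> nat ->
    k0 = 0%N :> nat -> kl = n.-1 :> nat ->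
    blk X i' k0 *m blk Y k0 j' = 0 /\ blk X i kl *m blk Y kl j = 0) ->
  blk_toeplitz (X *m Y).
Proof.
move=> HX HY corner i j i' j' ei ej.
have hn : (0 < n)%N by have := ltn_ord i; lia.
have hl : (n.-1 < n)%N by rewrite prednK.
have [c0 cl] := corner i j i' j' (Ordinal hn) (Ordinal hl) ei ej erefl erefl.
by rewrite (blk_mul_succ (k0 := Ordinal hn) (kl := Ordinal hl) HX HY ei ej) // c0 cl addr0 subr0.
Qed.

Lemma blk_toeplitz_mul_corner n d (X Y : 'M[F]_(n * d)) (i j i' j' k0 kl : 'I_n) :
  blk_toeplitz X -> blk_toeplitz Y -> blk_toeplitz (X *m Y) ->
  i' = i.+1 :> nat -> j' = j.+1 :> nat -> k0 = 0%N :> nat -> kl = n.-1 :> nat ->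
  blk X i' k0 *m blk Y k0 j' = blk X i kl *m blk Y kl j.
Proof.
move=> HX HY HXY ei ej e0 el; apply/eqP; rewrite -subr_eq0; apply/eqP.
apply: (addrI (blk (X *m Y) i j)); rewrite addr0 addrA.
by rewrite -(blk_mul_succ HX HY ei ej e0 el) (HXY i j).
Qed.

End Blocks.

Section PolyMultiples.
Variables (F : fieldType) (d : nat) (M : 'M[F]_d.+1).

Definition pmx_multiple (c : {poly F}) (X : 'M[F]_d.+1) :=
  exists q, X = horner_mx M (c * q).

Lemma pmx_multiple0 c : pmx_multiple c 0.
Proof. by exists 0; rewrite mulr0 rmorph0. Qed.

Lemma pmx_multipleD c X Y :
  pmx_multiple c X -> pmx_multiple c Y -> pmx_multiple c (X + Y).
Proof. by move=> [q ->] [r ->]; exists (q + r); rewrite mulrDr rmorphD. Qed.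

Lemma pmx_multiple_sum c I (r : seq I) (P : pred I) (G : I -> 'M[F]_d.+1) :
  (forall i, P i -> pmx_multiple c (G i)) -> pmx_multiple c (\sum_(i <- r | P i) G i).
Proof. by move=> H; apply: big_ind => //; [exact: pmx_multiple0 | exact: pmx_multipleD]. Qed.

Lemma pmx_multiple_inPM c X : pmx_multiple c X -> inPM M X.
Proof. by move=> [q ->]; exists (c * q). Qed.

Lemma pmx_multiple_mull c X Y : inPM M X -> pmx_multiple c Y -> pmx_multiple c (X *m Y).
Proof. by move=> [a ->] [q ->]; exists (a * q); rewrite mulmxE -rmorphM mulrCA. Qed.

Lemma pmx_multiple_mulr c X Y : pmx_multiple c X -> inPM M Y -> pmx_multiple c (X *m Y).
Proof. by move=> [q ->] [a ->]; exists (q * a); rewrite mulmxE -rmorphM mulrA. Qed.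

Lemma pmx_multipleZ c a X : pmx_multiple c X -> pmx_multiple c (a *: X).
Proof.
by rewrite -mul_scalar_mx; apply: pmx_multiple_mull; exists a%:P; rewrite horner_mx_C.
Qed.

Lemma pmx_multiple_mul_eq0 a b X Y :
  pmx_multiple a X -> pmx_multiple b Y -> mxminpoly M %| a * b -> X *m Y = 0.
Proof.
move=> [q ->] [r ->] /dvdpP [k hk].
rewrite mulmxE -rmorphM mulrACA hk (mulrC k) -mulrA rmorphM /=.
by rewrite mx_root_minpoly mul0r.
Qed.

End PolyMultiples.

Section LowerIdeal.
Variables (F : fieldType) (n d : nat) (M : 'M[F]_d.+1) (sm u : {poly F}).

Definition upper_dvd_toeplitz (Y : 'M[F]_(n * d.+1)) :=
  [/\ blk_toeplitz Y, forall i j, inPM M (blk Y i j) &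
      forall i j : 'I_n, (i < j)%N -> pmx_multiple M sm (blk Y i j)].

Definition lower_toeplitz_ideal (Z : 'M[F]_(n * d.+1)) :=
  [/\ forall i j : 'I_n, (i <= j)%N -> blk Z i j = 0, blk_toeplitz Z &
      forall i j, pmx_multiple M u (blk Z i j)].

Lemma lower_toeplitz_ideal_subalgebra : is_subalgebra lower_toeplitz_ideal.
Proof.
split; [|split; [|split]].
- split; first by move=> i j _; rewrite blk0.
    by move=> i j i' j' _ _; rewrite !blk0.
  by move=> i j; rewrite blk0; apply: pmx_multiple0.
- move=> Z Z' [HZ1 HZ2 HZ3] [HW1 HW2 HW3]; split.
  + by move=> i j h; rewrite blkD HZ1 // HW1 // addr0.
  + by move=> i j i' j' ei ej; rewrite !blkD (HZ2 i j) // (HW2 i j).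
  + by move=> i j; rewrite blkD; apply: pmx_multipleD.
- move=> c Z [HZ1 HZ2 HZ3]; split.
  + by move=> i j h; rewrite blkZ HZ1 // scaler0.
  + by move=> i j i' j' ei ej; rewrite !blkZ (HZ2 i j).
  + by move=> i j; rewrite blkZ; apply: pmx_multipleZ.
- move=> Z Z' [HZ1 HZ2 HZ3] [HW1 HW2 HW3]; split.
  + move=> i j hij; rewrite blk_mul; apply: big1 => k _.
    case: (leqP i k) => hk; first by rewrite HZ1 // mul0mx.
    by rewrite HW1 ?mulmx0 // (leq_trans (ltnW hk) hij).
  + apply: blk_toeplitz_mul => // i j i' j' k0 kl ei ej e0 el; split.
      by rewrite HW1 ?mulmx0 // e0.
    by rewrite HZ1 ?mul0mx // el; have := ltn_ord i'; lia.
  + move=> i j; rewrite blk_mul; apply: pmx_multiple_sum => k _.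
    exact: pmx_multiple_mulr (HZ3 i k) (pmx_multiple_inPM (HW3 k j)).
Qed.

Lemma upper_lower_inToeplitzPM Y Z :
  upper_dvd_toeplitz Y -> lower_toeplitz_ideal Z -> inToeplitzPM M (Y + Z).
Proof.
move=> [HY1 HY2 _] [_ HZ2 HZ3]; split.
  move=> i j; rewrite blkD; have [a ->] := HY2 i j.
  have [b ->] := pmx_multiple_inPM (HZ3 i j).
  by exists (a + b); rewrite rmorphD.
move=> i j i' j' e.
by rewrite !blkD (blk_toeplitzP HY1 e) (blk_toeplitzP HZ2 e).
Qed.

Hypothesis minpoly_dvd : mxminpoly M %| sm * u.

Lemma lower_toeplitz_ideal_mull Y Z :
  upper_dvd_toeplitz Y -> lower_toeplitz_ideal Z -> lower_toeplitz_ideal (Y *m Z).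
Proof.
move=> [HY1 HY2 HY3] [HZ1 HZ2 HZ3]; split.
- move=> i j hij; rewrite blk_mul; apply: big1 => k _.
  case: (leqP k j) => hk; first by rewrite HZ1 // mulmx0.
  exact: pmx_multiple_mul_eq0 (HY3 i k (leq_ltn_trans hij hk)) (HZ3 k j) minpoly_dvd.
- apply: blk_toeplitz_mul => // i j i' j' k0 kl ei ej e0 el; split.
    by rewrite HZ1 ?mulmx0 // e0.
  apply: pmx_multiple_mul_eq0 (HY3 i kl _) (HZ3 kl j) minpoly_dvd.
  by rewrite el; have := ltn_ord i'; lia.
- by move=> i j; rewrite blk_mul; apply: pmx_multiple_sum => k _; apply: pmx_multiple_mull.
Qed.

Lemma lower_toeplitz_ideal_mulr Y Z :
  upper_dvd_toeplitz Y -> lower_toeplitz_ideal Z -> lower_toeplitz_ideal (Z *m Y).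
Proof.
have minpoly_dvd' : mxminpoly M %| u * sm by rewrite mulrC.
move=> [HY1 HY2 HY3] [HZ1 HZ2 HZ3]; split.
- move=> i j hij; rewrite blk_mul; apply: big1 => k _.
  case: (leqP i k) => hk; first by rewrite HZ1 // mul0mx.
  exact: pmx_multiple_mul_eq0 (HZ3 i k) (HY3 k j (leq_trans hk hij)) minpoly_dvd'.
- apply: blk_toeplitz_mul => // i j i' j' k0 kl ei ej e0 el; split.
    by apply: pmx_multiple_mul_eq0 (HZ3 i' k0) (HY3 k0 j' _) minpoly_dvd'; rewrite e0 ej.
  by rewrite HZ1 ?mul0mx // el; have := ltn_ord i'; lia.
- by move=> i j; rewrite blk_mul; apply: pmx_multiple_sum => k _; apply: pmx_multiple_mulr.
Qed.

End LowerIdeal.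

Lemma inToeplitzPM_blk_toeplitz (F : fieldType) n d (M : 'M[F]_d.+1)
    (X : 'M[F]_(n * d.+1)) :
  inToeplitzPM M X -> blk_toeplitz X.
Proof. by move=> [_ Htoep] i j i' j' ei ej; apply: Htoep; lia. Qed.

Lemma maximal_upper_dvd_toeplitz (F : fieldType) n d (M : 'M[F]_d.+1)
    (S : 'M[F]_(n * d.+1) -> Prop) (sm : {poly F}) (Y : 'M[F]_(n * d.+1)) :
  maximal_subalg_T M S -> is_gcd_assoc M S false sm -> S Y ->
  upper_dvd_toeplitz M sm Y.
Proof.
move=> [_ [HT _]] [_ [sm_off _]] hY; have [Hin _] := HT Y hY; split => //.
  exact: inToeplitzPM_blk_toeplitz (HT Y hY).
move=> i j hij; have [b hb] := Hin i j.
have hsb : sm %| b by apply: sm_off; exists Y; split => //; exists i, j.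
by exists (b %/ sm); rewrite mulrC divpK.
Qed.

Lemma maximal_subalg_T_absorb (F : fieldType) n d (M : 'M[F]_d.+1)
    (S J : 'M[F]_(n * d.+1) -> Prop) :
  maximal_subalg_T M S -> is_subalgebra J ->
  (forall Y Z, S Y -> J Z -> J (Y *m Z) /\ J (Z *m Y)) ->
  (forall Y Z, S Y -> J Z -> inToeplitzPM M (Y + Z)) ->
  forall Z, J Z -> S Z.
Proof.
move=> [[HS0 [HSD [HSZ HSM]]] [_ Hmax]] [HJ0 [HJD [HJZ HJM]]] HSJ HSJT.
pose SJ X := exists Y Z, [/\ S Y, J Z & X = Y + Z].
have SJ_subalg : is_subalgebra SJ.
  split; [|split; [|split]].
  - by exists 0, 0; rewrite addr0.
  - move=> _ _ [Y [Z [hY hZ ->]]] [Y' [Z' [hY' hZ' ->]]].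
    by exists (Y + Y'), (Z + Z'); rewrite addrACA; split; auto.
  - move=> c _ [Y [Z [hY hZ ->]]].
    by exists (c *: Y), (c *: Z); rewrite scalerDr; split; auto.
  - move=> _ _ [Y [Z [hY hZ ->]]] [Y' [Z' [hY' hZ' ->]]].
    exists (Y *m Y'), (Y *m Z' + Z *m Y' + Z *m Z').
    split; [exact: HSM | | by rewrite mulmxDl !mulmxDr !addrA].
    apply: (HJD); [apply: (HJD) | exact: HJM].
    + exact: proj1 (HSJ _ _ hY hZ').
    + exact: proj2 (HSJ _ _ hY' hZ).
have S_SJ X : S X -> SJ X by move=> hX; exists X, 0; rewrite addr0.
have SJ_T X : SJ X -> inToeplitzPM M X by move=> [Y [Z [hY hZ ->]]]; exact: HSJT.
by move=> Z hZ; apply: (Hmax SJ) => //; exists 0, Z; rewrite add0r.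
Qed.

Lemma maximal_gcd_assoc_mul_dvdp (F : fieldType) n d (M : 'M[F]_d.+1)
    (S : 'M[F]_(n * d.+1) -> Prop) (sp sm : {poly F}) :
  (1 < n)%N -> maximal_subalg_T M S ->
  is_gcd_assoc M S true sp -> is_gcd_assoc M S false sm ->
  sp * sm %| mxminpoly M.
Proof.
move=> n_gt1 Smax [_ [sp_off _]] Hsm.
have [sm_dvd _] := Hsm.
set u := mxminpoly M %/ sm.
have minpoly_dvd : mxminpoly M %| sm * u by rewrite mulrC divpK.
pose T0 := block_mx_of (fun i j : 'I_n =>
  if i == j.+1 :> nat then horner_mx M u else 0).
have T0_lower : lower_toeplitz_ideal M u T0.
  split.
  - move=> i j h; rewrite blk_block_mx_of.
    by case: eqP => // e; move: h; rewrite e ltnn.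
  - by move=> i j i' j' ei ej; rewrite !blk_block_mx_of ei ej.
  - move=> i j; rewrite blk_block_mx_of; case: ifP => _; last exact: pmx_multiple0.
    by exists 1; rewrite mulr1.
have ST0 : S T0.
  apply: (maximal_subalg_T_absorb Smax (lower_toeplitz_ideal_subalgebra n M u)) => //.
    move=> Y Z hY hZ; have hY' := maximal_upper_dvd_toeplitz Smax Hsm hY.
    exact: (conj (lower_toeplitz_ideal_mull minpoly_dvd hY' hZ)
                 (lower_toeplitz_ideal_mulr minpoly_dvd hY' hZ)).
  move=> Y Z hY; apply: upper_lower_inToeplitzPM.
  exact: maximal_upper_dvd_toeplitz Smax Hsm hY.
have sp_dvd_u : sp %| u.
  apply: sp_off; exists T0; split => //.
  exists (Ordinal n_gt1), (Ordinal (ltnW n_gt1)).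
  by split => //; rewrite blk_block_mx_of.
by rewrite -(divpK sm_dvd) -/u dvdp_mul.
Qed.

(* The corner identity for A^2, written with the given shape of the blocks:
   row i column 0 is A_i, row 0 column n-j is A_{j-n}. *)
Lemma toeplitz_sq_cross_dvdp (F : fieldType) n d (M : 'M[F]_d.+1)
    (A : 'M[F]_(n * d.+1)) (sp sm : {poly F}) (ap am : nat -> {poly F}) (i j : nat) :
  blk_toeplitz A -> blk_toeplitz (A *m A) ->
  (forall k : nat, (1 <= k < n)%N ->
     (forall i j : 'I_n, i = (j + k)%N :> nat -> blk A i j = horner_mx M (sp * ap k)) /\
     (forall i j : 'I_n, j = (i + k)%N :> nat -> blk A i j = horner_mx M (sm * am k))) ->
  (1 <= i < n)%N -> (1 <= j < n)%N ->
  mxminpoly M %| sp * sm * (ap i * am (n - j)%N - am (n - i)%N * ap j).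
Proof.
move=> HA HAA HAk hi hj.
have h0 : (0 < n)%N by lia.
have hi0 : (i.-1 < n)%N by lia.
have hi' : (i < n)%N by lia.
have hj0 : ((n - j).-1 < n)%N by lia.
have hj' : (n - j < n)%N by lia.
have hl : (n.-1 < n)%N by lia.
have corner := blk_toeplitz_mul_corner (i := Ordinal hi0) (j := Ordinal hj0)
  (i' := Ordinal hi') (j' := Ordinal hj') (k0 := Ordinal h0) (kl := Ordinal hl)
  HA HA HAA ltac:(rewrite /=; lia) ltac:(rewrite /=; lia) erefl erefl.
have hnj : (1 <= n - j < n)%N by lia.
have hni : (1 <= n - i < n)%N by lia.
rewrite (proj1 (HAk i hi) _ (Ordinal h0)) ?(proj2 (HAk _ hnj) (Ordinal h0)) /=
  in corner; try lia.
rewrite (proj2 (HAk _ hni) (Ordinal hi0)) ?(proj1 (HAk j hj) (Ordinal hl)) /=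
  in corner; try lia.
rewrite !mulmxE -!rmorphM in corner.
apply: mxminpoly_min; rewrite (_ : _ * _ = sp * ap i * (sm * am (n - j)%N)
  - sm * am (n - i)%N * (sp * ap j)); last by ring.
by rewrite rmorphB /= corner subrr.
Qed.

Lemma dvdp_xi_sub (F : fieldType) (D ai aj bi bj gi gj : {poly F}) :
  D %| ai * bj - bi * aj -> D %| gi * bi - 1 -> D %| gj * bj - 1 ->
  D %| ai * gi - aj * gj.
Proof.
move=> cross gamma_i gamma_j.
rewrite (_ : ai * gi - aj * gj =
  gi * gj * (ai * bj - bi * aj) - ai * gi * (gj * bj - 1) + aj * gj * (gi * bi - 1));
  last by ring.
by rewrite dvdp_add ?dvdp_sub ?dvdp_mull.
Qed.

Unset Implicit Arguments.
Set Strict Implicit.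

Theorem lemma7p3 (F : numClosedFieldType) (n d : nat) (M : 'M[F]_d.+1)
  (S : 'M[F]_(n * d.+1) -> Prop) (sp sm : {poly F}) (A : 'M[F]_(n * d.+1))
  (ap am gamma : nat -> {poly F}) :
  (2 <= n)%N ->
  mxminpoly M = char_poly M ->
  maximal_subalg_T M S -> generic_subalg S ->
  is_gcd_assoc M S true sp -> is_gcd_assoc M S false sm ->
  S A ->
  (forall k : nat, (1 <= k < n)%N ->
     coprimep (ap k) (mxminpoly M) /\ coprimep (am k) (mxminpoly M) /\
     (forall i j : 'I_n, i = (j + k)%N :> nat ->
        blk A i j = horner_mx M (sp * ap k)) /\
     (forall i j : 'I_n, j = (i + k)%N :> nat ->
        blk A i j = horner_mx M (sm * am k))) ->
  (forall i : nat, (1 <= i < n)%N ->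
     mxminpoly M %| gamma i * am (n - i)%N - 1) ->
  forall i j : nat, (1 <= i < n)%N -> (1 <= j < n)%N ->
    mxminpoly M %/ (sp * sm) %| ap i * gamma i - ap j * gamma j.
Proof.
move=> n_ge2 _ Smax _ Hsp Hsm HA HAk Hgam i j hi hj.
set p := mxminpoly M in HAk Hgam *; set D := p %/ (sp * sm).
have pD : p = sp * sm * D.
  by rewrite mulrC divpK // (maximal_gcd_assoc_mul_dvdp n_ge2 Smax Hsp Hsm).
have ss_neq0 : sp * sm != 0.
  apply: contra_neq (monic_neq0 (mxminpoly_monic M)) => ss0.
  by rewrite -/p pD ss0 mul0r.
have D_dvd_p : D %| p by rewrite pD dvdp_mull.
have [[_ [_ [_ HSM]]] [HT _]] := Smax.
have cross := toeplitz_sq_cross_dvdp (inToeplitzPM_blk_toeplitz (HT A HA))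
  (inToeplitzPM_blk_toeplitz (HT _ (HSM A A HA HA)))
  (fun k hk => proj2 (proj2 (HAk k hk))) hi hj.
apply: (@dvdp_xi_sub _ D _ _ (am (n - i)%N) (am (n - j)%N)).
- by rewrite -(dvdp_mul2l _ _ ss_neq0) -pD.
- exact: dvdp_trans D_dvd_p (Hgam i hi).
- exact: dvdp_trans D_dvd_p (Hgam j hj).
Qed.
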